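(* Let $\theta\in\mathbb{R}$, let $U\subset\mathbb{R}^4$ be a connected open set, identified with an open subset of $\mathbb{C}^2$ via $z_1=x^2+ix^1$, $z_2=x^4+ix^3$, and let $\omega^\pm:U\to M_4(\mathbb{R})$ be smooth with $\omega^\pm(x)$ antisymmetric and $\star\omega^\pm(x)=\pm\omega^\pm(x)$ for all $x\in U$. Assume $\det[E_4-\omega^\pm\theta^\mp]\neq0$ on $U$ and that for each $x$ the matrix $g^\pm(x):=2\left(E_4-\omega^\pm(x)\theta^\mp\right)^{-1}-E_4$ lies in the image of $\iota_{sym}$. Put $h^\pm:=\iota_{sym}^{-1}[g^\pm]$. Then $h^\pm$ is a smooth map to Hermitian $2\times 2$ matrices which is either positive definite at every point of $U$ or negative definite at every point of $U$, $\det[h^\pm]=1$ on $U$, and hence its Ricci curvature $R_{\bar jk}=\partial_{\bar z_j}\partial_{z_k}\log\det[h^\pm]$ vanishes identically on $U$ (i.e. $h^\pm$ is a local Ricci-flat Hermitian metric).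
   Context: $E_4$ is the $4\times4$ identity matrix. For a real antisymmetric $4\times 4$ matrix $\omega=(\omega_{kl})$, $(\star\omega)_{kl}=\frac12\sum_{m,n=1}^4\varepsilon_{klmn}\omega_{mn}$ ($\varepsilon$ the Levi-Civita symbol). For $\theta\in\mathbb{R}$, $\theta^{\pm}$ denotes the $4\times4$ matrix whose only nonzero entries are $(\theta^\pm)_{12}=-\theta$, $(\theta^\pm)_{21}=\theta$, $(\theta^\pm)_{34}=\mp\theta$, $(\theta^\pm)_{43}=\pm\theta$. For a Hermitian $2\times2$ matrix $h=(h_{k\bar l})$, $\iota_{sym}(h)$ is the real symmetric $4\times4$ matrix $$\begin{pmatrix} h_{1\bar1}&0&\frac12(h_{1\bar2}+h_{2\bar1})&\frac1{2i}(h_{2\bar1}-h_{1\bar2})\\ 0&h_{1\bar1}&-\frac1{2i}(h_{2\bar1}-h_{1\bar2})&\frac12(h_{1\bar2}+h_{2\bar1})\\ \frac12(h_{1\bar2}+h_{2\bar1})&-\frac1{2i}(h_{2\bar1}-h_{1\bar2})&h_{2\bar2}&0\\ \frac1{2i}(h_{2\bar1}-h_{1\bar2})&\frac12(h_{1\bar2}+h_{2\bar1})&0&h_{2\bar2}\end{pmatrix};$$ $\iota_{sym}$ is injective. The Ricci curvature of a Hermitian metric $h$ is taken to be $R_{\bar jk}=\partial_{\bar j}\partial_k\log\det[h]$. *)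

From Stdlib Require Import Reals.
Open Scope R_scope.

(* Coordinates x^1..x^4 of the paper are coord x 0 .. coord x 3. *)
Record R4 := mkR4 { x1 : R; x2 : R; x3 : R; x4 : R }.

Definition coord (x : R4) (k : nat) : R :=
  match k with 0 => x1 x | 1 => x2 x | 2 => x3 x | _ => x4 x end.

Definition upd (x : R4) (k : nat) (t : R) : R4 :=
  match k with
  | 0 => mkR4 t (x2 x) (x3 x) (x4 x)
  | 1 => mkR4 (x1 x) t (x3 x) (x4 x)
  | 2 => mkR4 (x1 x) (x2 x) t (x4 x)
  | _ => mkR4 (x1 x) (x2 x) (x3 x) t
  end.

(* sup-norm distance (induces the usual topology of R^4) *)
Definition dist4 (x y : R4) : R :=
  Rmax (Rmax (Rabs (x1 x - x1 y)) (Rabs (x2 x - x2 y)))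
       (Rmax (Rabs (x3 x - x3 y)) (Rabs (x4 x - x4 y))).

Definition open4 (U : R4 -> Prop) : Prop :=
  forall x, U x -> exists eps, 0 < eps /\ forall y, dist4 x y < eps -> U y.

Definition connected4 (U : R4 -> Prop) : Prop :=
  forall V W : R4 -> Prop, open4 V -> open4 W ->
    (forall x, U x -> V x \/ W x) ->
    (forall x, U x -> V x -> W x -> False) ->
    (forall x, U x -> ~ V x) \/ (forall x, U x -> ~ W x).

Definition cont_at4 (f : R4 -> R) (x : R4) : Prop :=
  forall eps, 0 < eps -> exists del, 0 < del /\
    forall y, dist4 x y < del -> Rabs (f y - f x) < eps.

Definition has_partial (U : R4 -> Prop) (f : R4 -> R) (k : nat) (D : R4 -> R)
  : Prop :=
  forall x, U x -> derivable_pt_lim (fun t => f (upd x k t)) (coord x k) (D x).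

Fixpoint Ck (n : nat) (U : R4 -> Prop) (f : R4 -> R) : Prop :=
  match n with
  | O => forall x, U x -> cont_at4 f x
  | S m => exists D : nat -> R4 -> R,
             (forall k, (k < 4)%nat -> has_partial U f k (D k)) /\
             (forall k, (k < 4)%nat -> Ck m U (D k))
  end.

Definition smooth_on (U : R4 -> Prop) (f : R4 -> R) : Prop :=
  forall n, Ck n U f.

Definition M4 := nat -> nat -> R.

Definition sum4 (f : nat -> R) : R := f 0%nat + f 1%nat + f 2%nat + f 3%nat.

Definition meq (A B : M4) : Prop :=
  forall i j, (i < 4)%nat -> (j < 4)%nat -> A i j = B i j.

Definition E4 : M4 := fun i j => if Nat.eqb i j then 1 else 0.
Definition madd (A B : M4) : M4 := fun i j => A i j + B i j.
Definition msub (A B : M4) : M4 := fun i j => A i j - B i j.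
Definition mscal (c : R) (A : M4) : M4 := fun i j => c * A i j.
Definition mmul (A B : M4) : M4 := fun i j => sum4 (fun k => A i k * B k j).

Definition antisym (A : M4) : Prop :=
  forall i j, (i < 4)%nat -> (j < 4)%nat -> A i j = - A j i.

Definition inverse4 (A N : M4) : Prop := meq (mmul A N) E4 /\ meq (mmul N A) E4.

Definition sgnR (r : R) : R :=
  if Rlt_dec 0 r then 1 else if Rlt_dec r 0 then -1 else 0.

(* Levi-Civita symbol on indices 0..3: sign of the permutation (i,j,k,l) of
   (0,1,2,3), and 0 if two indices coincide. *)
Definition levi (i j k l : nat) : R :=
  sgnR (INR j - INR i) * sgnR (INR k - INR i) * sgnR (INR l - INR i) *
  sgnR (INR k - INR j) * sgnR (INR l - INR j) * sgnR (INR l - INR k).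

Definition star (w : M4) : M4 :=
  fun k l => / 2 * sum4 (fun m => sum4 (fun n => levi k l m n * w m n)).

Definition det4 (A : M4) : R :=
  sum4 (fun i => sum4 (fun j => sum4 (fun k => sum4 (fun l =>
    levi i j k l * A 0%nat i * A 1%nat j * A 2%nat k * A 3%nat l)))).

(* sign s = true means "+", s = false means "-" *)
Definition sgn (s : bool) : R := if s then 1 else -1.

Definition thetaM (s : bool) (th : R) : M4 :=
  fun i j =>
    match i, j with
    | 0%nat, 1%nat => - th
    | 1%nat, 0%nat => th
    | 2%nat, 3%nat => - (sgn s * th)
    | 3%nat, 2%nat => sgn s * th
    | _, _ => 0
    end.

Record Cx := mkC { Re : R; Im : R }.
Definition Cadd (a b : Cx) : Cx := mkC (Re a + Re b) (Im a + Im b).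
Definition Csub (a b : Cx) : Cx := mkC (Re a - Re b) (Im a - Im b).
Definition Cmul (a b : Cx) : Cx :=
  mkC (Re a * Re b - Im a * Im b) (Re a * Im b + Im a * Re b).
Definition Cconj (a : Cx) : Cx := mkC (Re a) (- Im a).
Definition Cr (r : R) : Cx := mkC r 0.
Definition C0 : Cx := Cr 0.

(* A Hermitian 2x2 matrix h = (h_{k bar l}) is given by its real diagonal
   entries h_{1bar1}, h_{2bar2} and h_{1bar2} = hre + i him;
   then h_{2bar1} = conj h_{1bar2} = hre - i him. *)
Record Herm2 := mkH { h11 : R; h22 : R; hre : R; him : R }.

(* entries h_{k bar l}, indices 0..1 (paper's 1..2) *)
Definition hent (h : Herm2) (k l : nat) : Cx :=
  match k, l with
  | 0%nat, 0%nat => Cr (h11 h)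
  | 1%nat, 1%nat => Cr (h22 h)
  | 0%nat, 1%nat => mkC (hre h) (him h)
  | _, _ => mkC (hre h) (- him h)
  end.

Definition detH (h : Herm2) : Cx :=
  Csub (Cmul (hent h 0 0) (hent h 1 1)) (Cmul (hent h 0 1) (hent h 1 0)).

Definition hform (h : Herm2) (v0 v1 : Cx) : Cx :=
  let v k := match k with 0%nat => v0 | _ => v1 end in
  let t k l := Cmul (Cmul (hent h k l) (v k)) (Cconj (v l)) in
  Cadd (Cadd (t 0%nat 0%nat) (t 0%nat 1%nat)) (Cadd (t 1%nat 0%nat) (t 1%nat 1%nat)).

Definition posdefH (h : Herm2) : Prop :=
  forall v0 v1 : Cx, (v0 <> C0 \/ v1 <> C0) -> 0 < Re (hform h v0 v1).
Definition negdefH (h : Herm2) : Prop :=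
  forall v0 v1 : Cx, (v0 <> C0 \/ v1 <> C0) -> Re (hform h v0 v1) < 0.

(* iota_sym, written literally with the paper's complex formula; every entry
   is real for Hermitian h, and we take that real value. *)
Definition iota_sym (h : Herm2) : M4 :=
  let a := Re (Cmul (Cr (/ 2)) (Cadd (hent h 0 1) (hent h 1 0))) in
  (* 1/(2i) = -i/2 *)
  let b := Re (Cmul (mkC 0 (- / 2)) (Csub (hent h 1 0) (hent h 0 1))) in
  fun i j =>
    match i, j with
    | 0%nat, 0%nat => h11 h | 0%nat, 1%nat => 0     | 0%nat, 2%nat => a     | 0%nat, 3%nat => b
    | 1%nat, 0%nat => 0     | 1%nat, 1%nat => h11 h | 1%nat, 2%nat => - b   | 1%nat, 3%nat => a
    | 2%nat, 0%nat => a     | 2%nat, 1%nat => - b   | 2%nat, 2%nat => h22 h | 2%nat, 3%nat => 0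
    | 3%nat, 0%nat => b     | 3%nat, 1%nat => a     | 3%nat, 2%nat => 0     | 3%nat, 3%nat => h22 h
    | _, _ => 0
    end.

Definition smooth_herm (U : R4 -> Prop) (h : R4 -> Herm2) : Prop :=
  smooth_on U (fun x => h11 (h x)) /\ smooth_on U (fun x => h22 (h x)) /\
  smooth_on U (fun x => hre (h x)) /\ smooth_on U (fun x => him (h x)).

(* Complex coordinates z_1 = x^2 + i x^1, z_2 = x^4 + i x^3; with 0-based
   indices, z_{j} (j = 0,1) has real part coordinate 2j+1, imaginary part 2j. *)
Definition re_idx (j : nat) : nat := (2 * j + 1)%nat.
Definition im_idx (j : nat) : nat := (2 * j)%nat.

(* R_{bar j k} = d_{bar z_j} d_{z_k} f  with Wirtinger derivatives
   d_z = 1/2 (d_a - i d_b), d_{bar z} = 1/2 (d_a + i d_b), z = a + i b,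
   given second partials D2 l k = d_l d_k f. *)
Definition wirt (D2 : nat -> nat -> R4 -> R) (j k : nat) (x : R4) : Cx :=
  mkC (/ 4 * (D2 (re_idx j) (re_idx k) x + D2 (im_idx j) (im_idx k) x))
      (/ 4 * (D2 (im_idx j) (re_idx k) x - D2 (re_idx j) (im_idx k) x)).

Definition ricci_flat (U : R4 -> Prop) (h : R4 -> Herm2) : Prop :=
  let f := fun x => ln (Re (detH (h x))) in
  exists (D1 : nat -> R4 -> R) (D2 : nat -> nat -> R4 -> R),
    (forall k, (k < 4)%nat -> has_partial U f k (D1 k)) /\
    (forall l k, (l < 4)%nat -> (k < 4)%nat -> has_partial U (D1 k) l (D2 l k)) /\
    (forall j k x, (j < 2)%nat -> (k < 2)%nat -> U x -> wirt D2 j k x = C0).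

From Stdlib Require Import Reals Lra Lia.
Open Scope R_scope.

(* Self-duality leaves omega^± only three free entries a, b, c, and since a
   self-dual and an anti-self-dual matrix commute, X := omega^± theta^∓ satisfies
   X^2 = th^2 (a^2 + b^2 + c^2) E4.  Hence (E4 - X)^-1 = (E4 + X) / mu with
   mu = 1 - th^2 (a^2 + b^2 + c^2), so h^± is an explicit rational function of
   (a, b, c) with denominator mu, and its determinant is identically 1.  Thus h^±
   is smooth, it is definite with the sign of h_{1bar1}, which cannot change on the
   connected set U, and log det h^± = 0 has vanishing second derivatives. *)

Lemma upd_coord x k : upd x k (coord x k) = x.
Proof. destruct x; destruct k as [|[|[|k]]]; reflexivity. Qed.

Lemma dist4_upd x k t : dist4 x (upd x k t) = Rabs (coord x k - t).
Proof.
  destruct x as [a b c d]; unfold dist4;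
  destruct k as [|[|[|k]]]; simpl; rewrite ?Rminus_diag, ?Rabs_R0;
  match goal with |- context [Rabs ?u] => pose proof (Rabs_pos u) end;
  unfold Rmax; repeat destruct Rle_dec; lra.
Qed.

Lemma derivable_pt_lim_loc_ext f g x l r : 0 < r ->
  (forall t, Rabs (t - x) < r -> f t = g t) ->
  derivable_pt_lim f x l -> derivable_pt_lim g x l.
Proof.
  intros Hr Hfg Hf eps Heps. destruct (Hf eps Heps) as [d Hd].
  assert (Hdr : 0 < Rmin d r) by (apply Rmin_pos; [apply cond_pos | lra]).
  exists (mkposreal _ Hdr). intros t Ht0 Ht. simpl in Ht.
  rewrite <- !Hfg.
  - apply Hd; [exact Ht0 | exact (Rlt_le_trans _ _ _ Ht (Rmin_l _ _))].
  - rewrite Rminus_diag, Rabs_R0; lra.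
  - replace (x + t - x) with t by ring. exact (Rlt_le_trans _ _ _ Ht (Rmin_r _ _)).
Qed.

Lemma derivable_pt_lim_inv_pow y k : y <> 0 ->
  derivable_pt_lim (fun z => / z ^ k) y (- INR k * / y ^ S k).
Proof.
  intros Hy.
  pose proof (derivable_pt_lim_div _ _ _ _ _ (derivable_pt_lim_const 1 y)
                (derivable_pt_lim_pow y k) (pow_nonzero y k Hy)) as D.
  replace (- INR k * / y ^ S k)
    with ((0 * y ^ k - INR k * y ^ Init.Nat.pred k * 1) / (y ^ k)²).
  - apply (derivable_pt_lim_loc_ext (fct_cte 1 / (fun z => z ^ k))%F _ _ _ 1 Rlt_0_1);
      [|exact D].
    intros t _. unfold div_fct, fct_cte, Rdiv. ring.
  - unfold Rsqr. destruct k; cbn [pow Init.Nat.pred]; [rewrite INR_0|];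
    field; auto using pow_nonzero.
Qed.

Lemma cont_at4_const c x : cont_at4 (fun _ => c) x.
Proof.
  intros eps Heps. exists 1. split; [lra|]. intros y _.
  rewrite Rminus_diag, Rabs_R0. exact Heps.
Qed.

Lemma cont_at4_plus f g x : cont_at4 f x -> cont_at4 g x ->
  cont_at4 (fun y => f y + g y) x.
Proof.
  intros Hf Hg eps Heps.
  destruct (Hf (eps / 2)) as [d1 [Hd1 H1]]; [lra|].
  destruct (Hg (eps / 2)) as [d2 [Hd2 H2]]; [lra|].
  exists (Rmin d1 d2). split; [apply Rmin_pos; lra|]. intros y Hy.
  specialize (H1 y (Rlt_le_trans _ _ _ Hy (Rmin_l _ _))).
  specialize (H2 y (Rlt_le_trans _ _ _ Hy (Rmin_r _ _))).
  replace (f y + g y - (f x + g x)) with ((f y - f x) + (g y - g x)) by ring.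
  eapply Rle_lt_trans; [apply Rabs_triang | lra].
Qed.

Lemma cont_at4_mult f g x : cont_at4 f x -> cont_at4 g x ->
  cont_at4 (fun y => f y * g y) x.
Proof.
  intros Hf Hg eps Heps.
  set (M := Rabs (f x) + Rabs (g x) + 1).
  assert (HM : 0 < M) by (unfold M; pose proof (Rabs_pos (f x)); pose proof (Rabs_pos (g x)); lra).
  set (e := Rmin 1 (eps / M)).
  assert (He : 0 < e) by (apply Rmin_pos; [lra | apply Rdiv_lt_0_compat; lra]).
  assert (He1 : e <= 1) by apply Rmin_l.
  assert (HeM : e * M <= eps).
  { assert (e <= eps / M) by apply Rmin_r.
    apply (Rmult_le_compat_r M) in H; [|lra].
    unfold Rdiv in H. rewrite Rmult_assoc, Rinv_l in H; lra. }
  destruct (Hf e He) as [d1 [Hd1 H1]].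
  destruct (Hg e He) as [d2 [Hd2 H2]].
  exists (Rmin d1 d2). split; [apply Rmin_pos; lra|]. intros y Hy.
  specialize (H1 y (Rlt_le_trans _ _ _ Hy (Rmin_l _ _))).
  specialize (H2 y (Rlt_le_trans _ _ _ Hy (Rmin_r _ _))).
  set (u := f y - f x) in *. set (v := g y - g x) in *.
  replace (f y * g y - f x * g x) with (u * v + f x * v + g x * u) by (unfold u, v; ring).
  assert (Htri : Rabs (u * v + f x * v + g x * u)
                 <= Rabs u * Rabs v + Rabs (f x) * Rabs v + Rabs (g x) * Rabs u).
  { rewrite <- !Rabs_mult. eapply Rle_trans; [apply Rabs_triang|].
    apply Rplus_le_compat_r, Rabs_triang. }
  pose proof (Rabs_pos u). pose proof (Rabs_pos v).
  pose proof (Rabs_pos (f x)). pose proof (Rabs_pos (g x)).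
  unfold M in HeM. nra.
Qed.

Lemma cont_at4_comp phi f x : cont_at4 f x -> continuity_pt phi (f x) ->
  cont_at4 (fun y => phi (f y)) x.
Proof.
  intros Hf Hphi eps Heps. destruct (Hphi eps Heps) as [a [Ha Hphi']].
  destruct (Hf a Ha) as [d [Hd H]]. exists d. split; [exact Hd|]. intros y Hy.
  destruct (Req_dec (f y) (f x)) as [E|E].
  - rewrite E, Rminus_diag, Rabs_R0. exact Heps.
  - apply (Hphi' (f y)). split; [split; [exact I | congruence] | exact (H y Hy)].
Qed.

Definition detHr (h : Herm2) : R := h11 h * h22 h - hre h ^ 2 - him h ^ 2.

Lemma detH_detHr h : detH h = Cr (detHr h).
Proof. unfold detH, detHr, hent, Csub, Cmul, Cr; simpl; f_equal; ring. Qed.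

Lemma h11_mul_hform h p q r u : h11 h * Re (hform h (mkC p q) (mkC r u)) =
  (h11 h * p + hre h * r + him h * u) ^ 2 + (h11 h * q + hre h * u - him h * r) ^ 2
  + detHr h * (r * r + u * u).
Proof. unfold hform, hent, detHr, Cmul, Cadd, Cconj, Cr; simpl; ring. Qed.

Lemma h11_mul_hform_pos h v0 v1 : 0 < detHr h -> v0 <> C0 \/ v1 <> C0 ->
  0 < h11 h * Re (hform h v0 v1).
Proof.
  intros Hdet Hv. destruct v0 as [p q], v1 as [r u]. rewrite h11_mul_hform.
  assert (Hh11 : h11 h <> 0).
  { intros E. unfold detHr in Hdet. rewrite E in Hdet. nra. }
  pose proof (pow2_ge_0 (h11 h * p + hre h * r + him h * u)).
  pose proof (pow2_ge_0 (h11 h * q + hre h * u - him h * r)).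
  destruct (Req_dec r 0) as [Hr|Hr]; [destruct (Req_dec u 0) as [Hu|Hu]|].
  - subst r u. destruct Hv as [Hv|Hv]; [|exfalso; exact (Hv eq_refl)].
    assert (Hpq : p <> 0 \/ q <> 0).
    { destruct (Req_dec p 0), (Req_dec q 0); subst; auto. }
    destruct Hpq as [Hx|Hx];
      pose proof (Rlt_0_sqr _ (Rmult_integral_contrapositive_currified _ _ Hh11 Hx));
      unfold Rsqr in *; nra.
  - pose proof (Rlt_0_sqr u Hu). unfold Rsqr in *. nra.
  - pose proof (Rlt_0_sqr r Hr). unfold Rsqr in *. nra.
Qed.

Lemma posdefH_of h : 0 < h11 h -> 0 < detHr h -> posdefH h.
Proof.
  intros H11 Hdet v0 v1 Hv. pose proof (h11_mul_hform_pos h v0 v1 Hdet Hv). nra.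
Qed.

Lemma negdefH_of h : h11 h < 0 -> 0 < detHr h -> negdefH h.
Proof.
  intros H11 Hdet v0 v1 Hv. pose proof (h11_mul_hform_pos h v0 v1 Hdet Hv). nra.
Qed.

Lemma sgnR_INR_sub a b :
  sgnR (INR a - INR b) = if Nat.ltb b a then 1 else if Nat.ltb a b then -1 else 0.
Proof.
  unfold sgnR.
  destruct (Nat.ltb_spec b a) as [H|H]; [|destruct (Nat.ltb_spec a b) as [H'|H']].
  - apply lt_INR in H.
    repeat match goal with |- context [Rlt_dec ?u ?v] => destruct (Rlt_dec u v) end; lra.
  - apply lt_INR in H'.
    repeat match goal with |- context [Rlt_dec ?u ?v] => destruct (Rlt_dec u v) end; lra.
  - replace b with a by lia. rewrite Rminus_diag.
    repeat match goal with |- context [Rlt_dec ?u ?v] => destruct (Rlt_dec u v) end; lra.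
Qed.

Ltac levi_compute := unfold star, sum4, levi; cbv beta; rewrite !sgnR_INR_sub;
  cbn [Nat.ltb Nat.leb]; ring.

Lemma star_01 w : star w 0%nat 1%nat = / 2 * (w 2%nat 3%nat - w 3%nat 2%nat).
Proof. levi_compute. Qed.
Lemma star_02 w : star w 0%nat 2%nat = / 2 * (w 3%nat 1%nat - w 1%nat 3%nat).
Proof. levi_compute. Qed.
Lemma star_03 w : star w 0%nat 3%nat = / 2 * (w 1%nat 2%nat - w 2%nat 1%nat).
Proof. levi_compute. Qed.

(* [selfdual_mx true] and [selfdual_mx false] parametrise the self-dual and the
   anti-self-dual antisymmetric matrices by their first row (0, a, b, c). *)
Definition selfdual_mx (s : bool) (a b c : R) : M4 := fun i j =>
  match i, j with
  | 0%nat, 1%nat => a | 1%nat, 0%nat => - a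
  | 0%nat, 2%nat => b | 2%nat, 0%nat => - b
  | 0%nat, 3%nat => c | 3%nat, 0%nat => - c
  | 2%nat, 3%nat => sgn s * a | 3%nat, 2%nat => - (sgn s * a)
  | 1%nat, 3%nat => - (sgn s * b) | 3%nat, 1%nat => sgn s * b
  | 1%nat, 2%nat => sgn s * c | 2%nat, 1%nat => - (sgn s * c)
  | _, _ => 0
  end.

Lemma selfdual_mxE s w : antisym w -> meq (star w) (mscal (sgn s) w) ->
  meq w (selfdual_mx s (w 0%nat 1%nat) (w 0%nat 2%nat) (w 0%nat 3%nat)).
Proof.
  intros Ha Hs.
  pose proof (Hs 0 1 ltac:(lia) ltac:(lia))%nat as S1.
  pose proof (Hs 0 2 ltac:(lia) ltac:(lia))%nat as S2.
  pose proof (Hs 0 3 ltac:(lia) ltac:(lia))%nat as S3.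
  rewrite star_01 in S1. rewrite star_02 in S2. rewrite star_03 in S3.
  unfold mscal in S1, S2, S3.
  intros i j Hi Hj.
  pose proof (Ha i j Hi Hj).
  pose proof (Ha 3 2 ltac:(lia) ltac:(lia))%nat.
  pose proof (Ha 1 3 ltac:(lia) ltac:(lia))%nat.
  pose proof (Ha 2 1 ltac:(lia) ltac:(lia))%nat.
  destruct i as [|[|[|[|i]]]]; try lia; destruct j as [|[|[|[|j]]]]; try lia;
    cbn [selfdual_mx]; lra.
Qed.

Definition selfdual_mu (th a b c : R) : R := 1 - th * th * (a * a + b * b + c * c).

Lemma selfdual_theta_mul s th a b c :
  let X := mmul (selfdual_mx s a b c) (thetaM (negb s) th) in
  meq (mmul (msub E4 X) (madd E4 X)) (mscal (selfdual_mu th a b c) E4).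
Proof.
  intros X i j Hi Hj. unfold X, selfdual_mu.
  destruct s; destruct i as [|[|[|[|i]]]]; try lia; destruct j as [|[|[|[|j]]]]; try lia;
    cbv -[Rmult Rplus Ropp Rminus Rinv]; ring.
Qed.

Lemma sum4_ext f g : (forall k, (k < 4)%nat -> f k = g k) -> sum4 f = sum4 g.
Proof. intros H. unfold sum4. rewrite !H by lia. reflexivity. Qed.

Lemma meq_refl A : meq A A.
Proof. intros i j _ _. reflexivity. Qed.

Lemma mmul_meq A A' B B' : meq A A' -> meq B B' -> meq (mmul A B) (mmul A' B').
Proof.
  intros HA HB i j Hi Hj. unfold mmul. apply sum4_ext.
  intros k Hk. rewrite HA, HB by assumption. reflexivity.
Qed.

Lemma msub_meq A A' B B' : meq A A' -> meq B B' -> meq (msub A B) (msub A' B').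
Proof. intros HA HB i j Hi Hj. unfold msub. rewrite HA, HB by assumption. reflexivity. Qed.

Lemma mscal_left_inverse M N P mu : meq (mmul N M) E4 -> meq (mmul M P) (mscal mu E4) ->
  meq (mscal mu N) P.
Proof.
  intros HNM HMP i j Hi Hj.
  transitivity (sum4 (fun k => N i k * mmul M P k j)).
  - rewrite (sum4_ext _ (fun k => N i k * mscal mu E4 k j))
      by (intros k Hk; rewrite HMP by assumption; reflexivity).
    unfold mscal, E4, sum4. destruct j as [|[|[|[|j]]]]; try lia; simpl; ring.
  - transitivity (sum4 (fun m => mmul N M i m * P m j)); [unfold mmul, sum4; ring|].
    rewrite (sum4_ext _ (fun m => E4 i m * P m j))
      by (intros m Hm; rewrite HNM by assumption; reflexivity).
    unfold E4, sum4. destruct i as [|[|[|[|i]]]]; try lia; simpl; ring.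
Qed.

Lemma selfdual_inverse s th w N : antisym w -> meq (star w) (mscal (sgn s) w) ->
  inverse4 (msub E4 (mmul w (thetaM (negb s) th))) N ->
  let a := w 0%nat 1%nat in let b := w 0%nat 2%nat in let c := w 0%nat 3%nat in
  selfdual_mu th a b c <> 0 /\
  meq (mscal (selfdual_mu th a b c) N)
      (madd E4 (mmul (selfdual_mx s a b c) (thetaM (negb s) th))).
Proof.
  intros Ha Hs [_ HNM] a b c.
  assert (HN : meq (mmul N (msub E4 (mmul (selfdual_mx s a b c) (thetaM (negb s) th)))) E4).
  { intros i j Hi Hj. rewrite <- HNM by assumption. revert i j Hi Hj.
    apply mmul_meq, msub_meq, mmul_meq; try apply meq_refl.
    intros i j Hi Hj. symmetry. exact (selfdual_mxE s w Ha Hs i j Hi Hj). }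
  pose proof (mscal_left_inverse _ _ _ _ HN (selfdual_theta_mul s th a b c)) as HP.
  split; [|exact HP].
  (* At [mu = 0] the diagonal entries would give [1 + a th = 0 = 1 - a th]. *)
  intros Hmu.
  pose proof (HP 0%nat 0%nat ltac:(lia) ltac:(lia)) as P00.
  pose proof (HP 2%nat 2%nat ltac:(lia) ltac:(lia)) as P22.
  rewrite Hmu in P00, P22.
  destruct s; cbv -[Rmult Rplus Ropp Rminus a] in P00, P22; lra.
Qed.

Lemma iota_symE h : iota_sym h 0%nat 0%nat = h11 h /\ iota_sym h 2%nat 2%nat = h22 h /\
  iota_sym h 0%nat 2%nat = hre h /\ iota_sym h 0%nat 3%nat = - him h.
Proof. cbn. repeat split; field. Qed.

Definition herm_of_selfdual (s : bool) (th a b c : R) : Herm2 :=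
  let mu := selfdual_mu th a b c in
  mkH (2 * (1 + a * th) / mu - 1) (2 * (1 - a * th) / mu - 1)
      (- (2 * (sgn s * c * th) / mu)) (- (2 * (sgn s * b * th) / mu)).

Lemma herm_of_iota_sym s th w N h : antisym w -> meq (star w) (mscal (sgn s) w) ->
  inverse4 (msub E4 (mmul w (thetaM (negb s) th))) N ->
  meq (iota_sym h) (msub (mscal 2 N) E4) ->
  let a := w 0%nat 1%nat in let b := w 0%nat 2%nat in let c := w 0%nat 3%nat in
  selfdual_mu th a b c <> 0 /\ h = herm_of_selfdual s th a b c.
Proof.
  intros Ha Hs Hinv Hio a b c.
  destruct (selfdual_inverse s th w N Ha Hs Hinv) as [Hmu HP]. split; [exact Hmu|].
  destruct (iota_symE h) as [I00 [I22 [I02 I03]]].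
  rewrite Hio in I00, I22, I02, I03 by lia.
  pose proof (HP 0%nat 0%nat ltac:(lia) ltac:(lia)) as P00.
  pose proof (HP 2%nat 2%nat ltac:(lia) ltac:(lia)) as P22.
  pose proof (HP 0%nat 2%nat ltac:(lia) ltac:(lia)) as P02.
  pose proof (HP 0%nat 3%nat ltac:(lia) ltac:(lia)) as P03.
  fold a b c in P00, P22, P02, P03.
  set (mu := selfdual_mu th a b c) in *.
  cbv -[Rmult Rplus Ropp Rminus Rinv sgn a b c mu] in I00, I22, I02, I03, P00, P22, P02, P03.
  destruct h as [x y u v]; cbn in I00, I22, I02, I03; unfold herm_of_selfdual; fold mu.
  assert (Hdiv : forall n e, mu * n = e -> n = e / mu) by (intros n e <-; field; exact Hmu).
  apply Hdiv in P00, P22, P02, P03.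
  rewrite <- I00, <- I22, <- I02, P00, P22, P02.
  replace v with (- ((R1 + R1) * N 0%nat 3%nat - R0)) by lra. rewrite P03.
  destruct s; cbn [sgn negb]; f_equal; field; exact Hmu.
Qed.

Section OnOpenSet.

Variable U : R4 -> Prop.
Hypothesis U_open : open4 U.

Lemma has_partial_ext f g k D : (forall x, U x -> f x = g x) ->
  has_partial U f k D -> has_partial U g k D.
Proof.
  intros Hfg Hf x Hx. destruct (U_open x Hx) as [e [He Hball]].
  apply (derivable_pt_lim_loc_ext (fun t => f (upd x k t)) _ _ _ e He); [|exact (Hf x Hx)].
  intros t Ht. apply Hfg, Hball. rewrite dist4_upd, Rabs_minus_sym. exact Ht.
Qed.

Lemma cont_at4_ext f g x : (forall y, U y -> f y = g y) -> U x ->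
  cont_at4 f x -> cont_at4 g x.
Proof.
  intros Hfg Hx Hf eps Heps. destruct (U_open x Hx) as [e [He Hball]].
  destruct (Hf eps Heps) as [d [Hd Hfd]].
  exists (Rmin d e). split; [apply Rmin_pos; lra|]. intros y Hy.
  rewrite <- !Hfg; auto.
  - exact (Hfd y (Rlt_le_trans _ _ _ Hy (Rmin_l _ _))).
  - exact (Hball y (Rlt_le_trans _ _ _ Hy (Rmin_r _ _))).
Qed.

Lemma Ck_ext n f g : (forall x, U x -> f x = g x) -> Ck n U f -> Ck n U g.
Proof.
  intros Hfg. destruct n as [|n]; simpl.
  - intros Hf x Hx. exact (cont_at4_ext f g x Hfg Hx (Hf x Hx)).
  - intros [D [HD HCk]]. exists D. split; [|exact HCk].
    intros k Hk. exact (has_partial_ext f g k (D k) Hfg (HD k Hk)).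
Qed.

Lemma Ck_const n c : Ck n U (fun _ => c).
Proof.
  revert c; induction n as [|n IH]; intros c; simpl.
  - intros x _. apply cont_at4_const.
  - exists (fun _ _ => 0). split; [|intros; apply IH].
    intros k _ x _. apply derivable_pt_lim_const.
Qed.

Lemma Ck_plus n f g : Ck n U f -> Ck n U g -> Ck n U (fun x => f x + g x).
Proof.
  revert f g; induction n as [|n IH]; simpl; intros f g Hf Hg.
  - intros x Hx. exact (cont_at4_plus f g x (Hf x Hx) (Hg x Hx)).
  - destruct Hf as [Df [HDf HCf]], Hg as [Dg [HDg HCg]].
    exists (fun k x => Df k x + Dg k x). split.
    + intros k Hk x Hx. exact (derivable_pt_lim_plus _ _ _ _ _ (HDf k Hk x Hx) (HDg k Hk x Hx)).
    + intros k Hk. exact (IH _ _ (HCf k Hk) (HCg k Hk)).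
Qed.

Lemma smooth_ext f g : (forall x, U x -> f x = g x) -> smooth_on U f -> smooth_on U g.
Proof. intros Hfg Hf n. exact (Ck_ext n f g Hfg (Hf n)). Qed.

Lemma smooth_const c : smooth_on U (fun _ => c).
Proof. intros n. apply Ck_const. Qed.

Lemma smooth_plus f g : smooth_on U f -> smooth_on U g -> smooth_on U (fun x => f x + g x).
Proof. intros Hf Hg n. exact (Ck_plus n f g (Hf n) (Hg n)). Qed.

Lemma smooth_cont_at4 f x : smooth_on U f -> U x -> cont_at4 f x.
Proof. intros Hf Hx. exact (Hf 0%nat x Hx). Qed.

(* Partial derivatives are unique, so any witness of [Ck (S n)] may be used. *)
Lemma smooth_partial f k D : (k < 4)%nat -> smooth_on U f -> has_partial U f k D ->
  smooth_on U D.
Proof.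
  intros Hk Hf HD n. destruct (Hf (S n)) as [D' [HD' HCk]].
  apply (Ck_ext n (D' k)); [|exact (HCk k Hk)].
  intros x Hx. exact (uniqueness_limite _ _ _ _ (HD' k Hk x Hx) (HD x Hx)).
Qed.

Lemma smooth_mult f g : smooth_on U f -> smooth_on U g -> smooth_on U (fun x => f x * g x).
Proof.
  intros Hf Hg n. revert f g Hf Hg.
  induction n as [|n IH]; intros f g Hf Hg.
  - intros x Hx. exact (cont_at4_mult f g x (Hf 0%nat x Hx) (Hg 0%nat x Hx)).
  - destruct (Hf 1%nat) as [Df [HDf _]], (Hg 1%nat) as [Dg [HDg _]].
    exists (fun k x => Df k x * g x + f x * Dg k x). split.
    + intros k Hk x Hx.
      pose proof (derivable_pt_lim_mult _ _ _ _ _ (HDf k Hk x Hx) (HDg k Hk x Hx)) as D.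
      unfold mult_fct in D. rewrite upd_coord in D. exact D.
    + intros k Hk. apply Ck_plus; apply IH;
        solve [assumption | exact (smooth_partial _ _ _ Hk Hf (HDf k Hk))
              | exact (smooth_partial _ _ _ Hk Hg (HDg k Hk))].
Qed.

(* The class of quotients [g / f ^ k] with [g] smooth is closed under partial
   differentiation, which makes the induction on the order go through. *)
Lemma smooth_mul_inv_pow f g k : smooth_on U f -> (forall x, U x -> f x <> 0) ->
  smooth_on U g -> smooth_on U (fun x => g x * / f x ^ k).
Proof.
  intros Hf Hf0 Hg n. revert g k Hg.
  induction n as [|n IH]; intros g k Hg.
  - intros x Hx. apply (cont_at4_mult g); [exact (Hg 0%nat x Hx)|].
    apply (cont_at4_comp (fun y => / y ^ k)); [exact (Hf 0%nat x Hx)|].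
    apply derivable_continuous_pt.
    exact (exist _ _ (derivable_pt_lim_inv_pow _ k (Hf0 x Hx))).
  - destruct (Hf 1%nat) as [Df [HDf _]], (Hg 1%nat) as [Dg [HDg _]].
    exists (fun i x => Dg i x * / f x ^ k + (- INR k * g x * Df i x) * / f x ^ S k).
    split.
    + intros i Hi x Hx.
      assert (Hfx : f (upd x i (coord x i)) <> 0) by (rewrite upd_coord; auto).
      pose proof (derivable_pt_lim_mult _ _ _ _ _ (HDg i Hi x Hx)
        (derivable_pt_lim_comp _ _ _ _ _ (HDf i Hi x Hx) (derivable_pt_lim_inv_pow _ k Hfx)))
        as D.
      unfold mult_fct, comp in D. rewrite upd_coord in D.
      replace (Dg i x * / f x ^ k + - INR k * g x * Df i x * / f x ^ S k)
        with (Dg i x * / f x ^ k + g x * (- INR k * / f x ^ S k * Df i x)) by ring.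
      exact D.
    + intros i Hi. apply Ck_plus.
      * exact (IH _ k (smooth_partial _ _ _ Hi Hg (HDg i Hi))).
      * apply (IH (fun x => - INR k * g x * Df i x)).
        apply smooth_mult; [apply smooth_mult; [apply smooth_const | exact Hg]|].
        exact (smooth_partial _ _ _ Hi Hf (HDf i Hi)).
Qed.

Lemma smooth_inv f : smooth_on U f -> (forall x, U x -> f x <> 0) ->
  smooth_on U (fun x => / f x).
Proof.
  intros Hf Hf0.
  apply (smooth_ext (fun x => 1 * / f x ^ 1)); [intros x _; rewrite pow_1; ring|].
  exact (smooth_mul_inv_pow f (fun _ => 1) 1 Hf Hf0 (smooth_const 1)).
Qed.

Lemma smooth_opp f : smooth_on U f -> smooth_on U (fun x => - f x).
Proof.
  intros Hf. apply (smooth_ext (fun x => -1 * f x)); [intros; ring|].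
  exact (smooth_mult _ _ (smooth_const (-1)) Hf).
Qed.

Lemma smooth_minus f g : smooth_on U f -> smooth_on U g -> smooth_on U (fun x => f x - g x).
Proof. intros Hf Hg. exact (smooth_plus _ _ Hf (smooth_opp g Hg)). Qed.

Lemma open4_pos f : (forall x, U x -> cont_at4 f x) -> open4 (fun x => U x /\ 0 < f x).
Proof.
  intros Hf x [Hx Hpos]. destruct (U_open x Hx) as [e [He Hball]].
  destruct (Hf x Hx (f x) Hpos) as [d [Hd Hfd]].
  exists (Rmin e d). split; [apply Rmin_pos; lra|]. intros y Hy. split.
  - exact (Hball y (Rlt_le_trans _ _ _ Hy (Rmin_l _ _))).
  - pose proof (Hfd y (Rlt_le_trans _ _ _ Hy (Rmin_r _ _))) as Hclose.
    apply Rabs_def2 in Hclose. lra.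
Qed.

Lemma connected4_sign f : connected4 U -> (forall x, U x -> cont_at4 f x) ->
  (forall x, U x -> f x <> 0) ->
  (forall x, U x -> 0 < f x) \/ (forall x, U x -> f x < 0).
Proof.
  intros Hconn Hf Hf0.
  assert (Hopp : forall x, U x -> cont_at4 (fun y => -1 * f y) x)
    by (intros x Hx; exact (cont_at4_mult _ _ x (cont_at4_const (-1) x) (Hf x Hx))).
  destruct (Hconn _ _ (open4_pos f Hf) (open4_pos _ Hopp)) as [Hneg|Hpos].
  - intros x Hx. destruct (Rtotal_order (f x) 0) as [H|[H|H]];
      [right | exact (False_ind _ (Hf0 x Hx H)) | left]; split; auto; lra.
  - intros x Hx [_ H1] [_ H2]. lra.
  - right. intros x Hx. destruct (Rtotal_order (f x) 0) as [H|[H|H]]; auto.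
    + exact (False_ind _ (Hf0 x Hx H)).
    + exfalso. exact (Hneg x Hx (conj Hx H)).
  - left. intros x Hx. destruct (Rtotal_order (f x) 0) as [H|[H|H]]; auto.
    + exfalso. apply (Hpos x Hx). split; [exact Hx | lra].
    + exact (False_ind _ (Hf0 x Hx H)).
Qed.

Lemma definite_of_detHr_pos h : connected4 U -> smooth_herm U h ->
  (forall x, U x -> 0 < detHr (h x)) ->
  (forall x, U x -> posdefH (h x)) \/ (forall x, U x -> negdefH (h x)).
Proof.
  intros Hconn [H11 _] Hdet.
  assert (Hh11 : forall x, U x -> h11 (h x) <> 0).
  { intros x Hx E. pose proof (Hdet x Hx) as D. unfold detHr in D. rewrite E in D. nra. }
  destruct (connected4_sign _ Hconn (fun x => smooth_cont_at4 _ x H11) Hh11) as [Hpos|Hneg].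
  - left. intros x Hx. exact (posdefH_of _ (Hpos x Hx) (Hdet x Hx)).
  - right. intros x Hx. exact (negdefH_of _ (Hneg x Hx) (Hdet x Hx)).
Qed.

Lemma ricci_flat_of_const_det h c : (forall x, U x -> Re (detH (h x)) = c) ->
  ricci_flat U h.
Proof.
  intros Hc. exists (fun _ _ => 0), (fun _ _ _ => 0). split; [|split].
  - intros k _. apply (has_partial_ext (fun _ => ln c)).
    + intros x Hx. rewrite Hc by exact Hx. reflexivity.
    + intros x _. apply derivable_pt_lim_const.
  - intros l k _ _ x _. apply derivable_pt_lim_const.
  - intros j k x _ _ _. unfold wirt, C0, Cr. f_equal; ring.
Qed.

End OnOpenSet.

Lemma detHr_herm_of_selfdual s th a b c : selfdual_mu th a b c <> 0 ->
  detHr (herm_of_selfdual s th a b c) = 1.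
Proof.
  unfold detHr, herm_of_selfdual, selfdual_mu; cbn; intros Hmu.
  destruct s; cbn [sgn]; field; exact Hmu.
Qed.

Ltac smooth_tac := repeat first
  [ assumption | apply smooth_plus | apply smooth_minus | apply smooth_mult
  | apply smooth_opp | apply smooth_const ].

Lemma smooth_herm_of_selfdual U s th a b c : open4 U ->
  smooth_on U a -> smooth_on U b -> smooth_on U c ->
  (forall x, U x -> selfdual_mu th (a x) (b x) (c x) <> 0) ->
  smooth_herm U (fun x => herm_of_selfdual s th (a x) (b x) (c x)).
Proof.
  intros HU Ha Hb Hc Hmu.
  assert (Hinv : smooth_on U (fun x => / selfdual_mu th (a x) (b x) (c x))).
  { apply smooth_inv; [exact HU | unfold selfdual_mu; smooth_tac | exact Hmu]. }
  unfold smooth_herm, herm_of_selfdual; cbn; unfold Rdiv; repeat split; smooth_tac.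
Qed.

Lemma smooth_herm_ext U h h' : open4 U -> (forall x, U x -> h x = h' x) ->
  smooth_herm U h' -> smooth_herm U h.
Proof.
  intros HU Hhh' [H1 [H2 [H3 H4]]].
  assert (Hfield : forall p : Herm2 -> R, smooth_on U (fun x => p (h' x)) ->
                                      smooth_on U (fun x => p (h x))).
  { intros p Hp. apply (smooth_ext U HU _ _ (fun x Hx => f_equal p (eq_sym (Hhh' x Hx))) Hp). }
  repeat split; apply Hfield; assumption.
Qed.

Theorem theorem3p1 :
  forall (s : bool) (th : R) (U : R4 -> Prop) (omega : R4 -> M4)
         (Ninv : R4 -> M4) (h : R4 -> Herm2),
    open4 U -> connected4 U ->
    (forall i j, (i < 4)%nat -> (j < 4)%nat -> smooth_on U (fun x => omega x i j)) ->
    (forall x, U x -> antisym (omega x)) ->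
    (forall x, U x -> meq (star (omega x)) (mscal (sgn s) (omega x))) ->
    (forall x, U x -> det4 (msub E4 (mmul (omega x) (thetaM (negb s) th))) <> 0) ->
    (* Ninv x = (E4 - omega^pm(x) theta^mp)^{-1} *)
    (forall x, U x -> inverse4 (msub E4 (mmul (omega x) (thetaM (negb s) th))) (Ninv x)) ->
    (* g^pm(x) = 2 Ninv x - E4 lies in the image of iota_sym, h^pm = iota_sym^{-1}[g^pm] *)
    (forall x, U x -> meq (iota_sym (h x)) (msub (mscal 2 (Ninv x)) E4)) ->
    smooth_herm U h /\
    ((forall x, U x -> posdefH (h x)) \/ (forall x, U x -> negdefH (h x))) /\
    (forall x, U x -> detH (h x) = Cr 1) /\
    ricci_flat U h.
Proof.
  (* The determinant hypothesis is implied by the existence of [Ninv]. *)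
  intros s th U omega Ninv h HU Hconn Hsm Hanti Hsd _ Hinv Hio.
  set (a := fun x => omega x 0%nat 1%nat).
  set (b := fun x => omega x 0%nat 2%nat).
  set (c := fun x => omega x 0%nat 3%nat).
  assert (Hh : forall x, U x ->
            selfdual_mu th (a x) (b x) (c x) <> 0 /\ h x = herm_of_selfdual s th (a x) (b x) (c x))
    by (intros x Hx; exact (herm_of_iota_sym s th _ _ _ (Hanti x Hx) (Hsd x Hx) (Hinv x Hx) (Hio x Hx))).
  assert (Hdet : forall x, U x -> detHr (h x) = 1).
  { intros x Hx. destruct (Hh x Hx) as [Hmu ->]. exact (detHr_herm_of_selfdual s th _ _ _ Hmu). }
  assert (Hsmooth : smooth_herm U h).
  { apply (smooth_herm_ext U h _ HU (fun x Hx => proj2 (Hh x Hx))).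
    apply smooth_herm_of_selfdual; try (apply Hsm; lia); [exact HU|].
    intros x Hx. exact (proj1 (Hh x Hx)). }
  assert (HdetH : forall x, U x -> detH (h x) = Cr 1)
    by (intros x Hx; rewrite detH_detHr, Hdet by exact Hx; reflexivity).
  split; [exact Hsmooth|]. split; [|split; [exact HdetH|]].
  - apply (definite_of_detHr_pos U HU h Hconn Hsmooth).
    intros x Hx. rewrite Hdet by exact Hx. lra.
  - apply (ricci_flat_of_const_det U HU h 1).
    intros x Hx. rewrite HdetH by exact Hx. reflexivity.
Qed.
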